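(* Let $\phi$ be a strictly convex norm on $\mathbf{R}^n$ of class $\mathcal{C}^2$ on $\mathbf{R}^n\setminus\{0\}$ and $K\subseteq\mathbf{R}^n$ closed. Then $\rho^\phi_K:\mathbf{R}^n\to[1,\infty]$ is upper semicontinuous and $$\rho^\phi_K(x)=t\,\rho^\phi_K(a+t(x-a))\quad\text{for }x\in\mathbf{R}^n,\ a\in\xi^\phi_K(x),\ 0<t\le\rho^\phi_K(x),\ t<\infty.$$ Moreover, $\mathrm{Cut}^\phi(K)=\{x\in\mathbf{R}^n:\rho^\phi_K(x)=1\}$.
   Context: A norm $\phi$ is strictly convex if $\phi(a+b)=\phi(a)+\phi(b)$ implies $\phi(b)a=\phi(a)b$. For closed $K$: $\delta^\phi_K(x)=\inf\{\phi(y-x):y\in K\}$; $\xi^\phi_K(x)=K\cap\{w:\phi(x-w)=\delta^\phi_K(x)\}$; $\rho^\phi_K(x)=\sup\bigl(\mathbf{R}\cap\{s:\delta^\phi_K(a+s(x-a))=s\,\delta^\phi_K(x)\}\bigr)$ for any $a\in\xi^\phi_K(x)$ (independent of the choice of $a$). $N^\phi(K)=\{(a,\eta):a\in K,\ \phi(\eta)=1,\ \delta^\phi_K(a+s\eta)=s\text{ for some }s>0\}$, $r^\phi_K(a,\eta)=\sup\{s>0:\delta^\phi_K(a+s\eta)=s\}$, and $\mathrm{Cut}^\phi(K)=\{a+r^\phi_K(a,\eta)\eta:(a,\eta)\in N^\phi(K),\ r^\phi_K(a,\eta)<\infty\}$. *)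

From HB Require Import structures.
From mathcomp Require Import all_boot all_order all_algebra.
From mathcomp Require Import all_classical all_reals all_analysis.
Set Implicit Arguments. Unset Strict Implicit. Unset Printing Implicit Defensive.
Import Order.TTheory GRing.Theory Num.Theory.
Import numFieldNormedType.Exports.
Local Open Scope classical_set_scope.
Local Open Scope ring_scope.

Section Defs.
Variables (R : realType) (n : nat).
Notation V := 'rV[R]_n.
Implicit Types (phi : V -> R) (K : set V).

Definition is_norm phi : Prop :=
  [/\ forall x, phi x = 0 -> x = 0,
      forall (c : R) x, phi (c *: x) = `|c| * phi x &
      forall x y, phi (x + y) <= phi x + phi y].

Definition strictly_convex phi : Prop :=
  forall a b, phi (a + b) = phi a + phi b -> phi b *: a = phi a *: b.

Definition ebasis (i : 'I_n) : V := delta_mx 0 i.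

Definition C2_off_origin phi : Prop :=
  forall x : V, x != 0 ->
    {for x, continuous phi} /\
    forall i j : 'I_n,
      [/\ derivable phi x (ebasis i),
          {for x, continuous (fun y => 'D_(ebasis i) phi y)},
          derivable (fun y => 'D_(ebasis i) phi y) x (ebasis j) &
          {for x, continuous (fun y => 'D_(ebasis j) (fun z => 'D_(ebasis i) phi z) y)}].

Definition dist_phi phi K (x : V) : R := inf [set phi (y - x) | y in K].

Definition xi_phi phi K (x : V) : set V :=
  K `&` [set w | phi (x - w) = dist_phi phi K x].

Definition rho_at phi K (x a : V) : \bar R :=
  ereal_sup [set s%:E | s in [set s : R |
     dist_phi phi K (a + s *: (x - a)) = s * dist_phi phi K x]].

(* rho^phi_K(x), computed with some a in xi^phi_K(x) (the value is independent of a) *)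
Definition rho_phi phi K (x : V) : \bar R := rho_at phi K x (xget 0 (xi_phi phi K x)).

Definition normal_bundle phi K (a eta : V) : Prop :=
  [/\ K a, phi eta = 1 &
      exists2 s : R, 0 < s & dist_phi phi K (a + s *: eta) = s].

Definition reach_phi phi K (a eta : V) : \bar R :=
  ereal_sup [set s%:E | s in [set s : R | 0 < s /\ dist_phi phi K (a + s *: eta) = s]].

Definition cut_phi phi K : set V :=
  [set x | exists a eta, normal_bundle phi K a eta /\
     exists r : R, reach_phi phi K a eta = r%:E /\ x = a + r *: eta].

End Defs.

Definition upper_semicontinuous {X : topologicalType} {R : numFieldType}
  (f : X -> \bar R) : Prop :=
  forall x (c : R), (f x < c%:E)%E -> exists2 U, nbhs x U & forall y, U y -> (f y < c%:E)%E.

(* Write d for the phi-distance to K and, for a nearest point a of x, let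
   S(x, a) = {s | d (a + s (x - a)) = s d x}, so that rho(x) = sup S(x, a).
   The triangle inequality puts [0, 1] in S(x, a), makes S(x, a) an interval on
   [0, +oo), and continuity of d shows that it is closed at its supremum.  Moving
   x to a + t (x - a) rescales S(x, a) by 1/t, which is the scaling identity.
   Strict convexity is used only to see that rho does not depend on the nearest
   point: if x has two nearest points a != b, then S(x, a) <= 1, since s > 1
   would give equality in the triangle inequality for b - (a + s (x - a)).  Cut
   points are the far ends a + r eta of maximal distance segments, i.e. the x
   with S(x, a) = [0, 1].  For upper semicontinuity at x with rho(x) < s, the
   continuous defect b |-> |phi (x - b) - d x| + |d (b + s (x - b)) - s d x|
   has a positive minimum over the compact set of almost nearest points of x,
   whereas at a nearest point b of any y with rho(y) >= s it is O(phi (y - x)). *)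

From HB Require Import structures.
From mathcomp Require Import all_boot all_order all_algebra.
From mathcomp Require Import all_classical all_reals all_analysis.
From mathcomp Require Import ring lra.
Import Order.TTheory GRing.Theory Num.Theory.
Import numFieldNormedType.Exports.
Local Open Scope classical_set_scope.
Local Open Scope ring_scope.

Lemma lipschitz_continuous (R : realFieldType) (V : normedModType R)
    (f : V -> R) (L : R) :
  (forall x y, `|f x - f y| <= L * `|x - y|) -> continuous f.
Proof.
move=> f_lip x; apply/cvgrPdist_lt => e e_gt0.
have L1_gt0 : 0 < `|L| + 1 by rewrite ltr_pwDr.
near=> y; apply: le_lt_trans (f_lip x y) _.
apply: (@le_lt_trans _ _ ((`|L| + 1) * `|x - y|)).
  by rewrite ler_wpM2r // (le_trans (ler_norm L)) // lerDl.
rewrite mulrC -ltr_pdivlMr //; near: y.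
by apply: cvgr_dist_lt; [exact: cvg_id | exact: divr_gt0].
Unshelve. all: by end_near.
Qed.

Lemma continuous_root_at_ereal_sup (R : realType) (P : set R) (g : R -> R) (r : R) :
  {for r, continuous g} -> (forall s, P s -> g s = 0 /\ s <= r) ->
  (r%:E <= ereal_sup (EFin @` P))%E -> g r = 0.
Proof.
move=> g_cont gP; apply: contraTeq => gr_neq0; rewrite -ltNge.
have gr_gt0 : 0 < `|g r| by rewrite normr_gt0.
have [e /= e_gt0 near_r] := (nbhs_ballP _ _).1 (cvgr_dist_lt _ _ g_cont _ gr_gt0).
have sup_le : (ereal_sup (EFin @` P) <= (r - e)%:E)%E.
  apply: ge_ereal_sup => _ [s Ps <-]; rewrite lee_fin leNgt; apply/negP => s_gt.
  have [gs0 s_le_r] := gP s Ps.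
  have : ball r e s by rewrite /ball /= ger0_norm; lra.
  by move/near_r; rewrite /= gs0 subr0 ltxx.
by apply: le_lt_trans sup_le _; rewrite lte_fin gtrBl.
Qed.

Lemma mx_norm_entry (R : realDomainType) m n (v : 'M[R]_(m, n)) i j :
  `|v i j| <= `|v|.
Proof.
rewrite [leRHS]/Num.norm /= mx_normrE.
exact: (le_bigmax _ (fun ij : 'I_m * 'I_n => `|v ij.1 ij.2|) (i, j)).
Qed.

Section Norm.
Context {R : realType} {n : nat} {phi : 'rV[R]_n -> R}.
Hypothesis phi_norm : is_norm phi.
Local Notation V := 'rV[R]_n.

Lemma phiZ (c : R) (x : V) : phi (c *: x) = `|c| * phi x.
Proof. by case: phi_norm. Qed.

Lemma ler_phiD (x y : V) : phi (x + y) <= phi x + phi y.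
Proof. by case: phi_norm. Qed.

Lemma phi_eq0 (x : V) : phi x = 0 -> x = 0.
Proof. by case: phi_norm => + _ _; apply. Qed.

Lemma phi0 : phi 0 = 0.
Proof. by rewrite -(scale0r (0 : V)) phiZ normr0 mul0r. Qed.

Lemma phiN (x : V) : phi (- x) = phi x.
Proof. by rewrite -scaleN1r phiZ normrN normr1 mul1r. Qed.

Lemma phi_ge0 (x : V) : 0 <= phi x.
Proof. by have := ler_phiD x (- x); rewrite subrr phi0 phiN; lra. Qed.

Lemma phi_distC (x y : V) : phi (x - y) = phi (y - x).
Proof. by rewrite -phiN opprB. Qed.

Lemma ge0_phiZ (c : R) (x : V) : 0 <= c -> phi (c *: x) = c * phi x.
Proof. by move=> c_ge0; rewrite phiZ ger0_norm. Qed.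

Lemma ler_phi_dist (x y : V) : `|phi x - phi y| <= phi (x - y).
Proof.
have := ler_phiD (x - y) y; have := ler_phiD (y - x) x.
rewrite !subrK phi_distC ler_norml; lra.
Qed.

Lemma ler_phi_sum (I : Type) (r : seq I) (P : pred I) (F : I -> V) :
  phi (\sum_(i <- r | P i) F i) <= \sum_(i <- r | P i) phi (F i).
Proof.
elim/big_ind2: _ => [|u a v b ua vb|//]; first by rewrite phi0.
exact: le_trans (ler_phiD _ _) (lerD ua vb).
Qed.

Lemma phi_le_mx_norm : exists2 C, 0 <= C & forall v : V, phi v <= C * `|v|.
Proof.
exists (\sum_(j < n) phi (delta_mx 0 j)).
  by apply: sumr_ge0 => j _; exact: phi_ge0.
move=> v; rewrite {1}(row_sum_delta v) mulr_suml.
apply: le_trans (ler_phi_sum _ _ _ _) _; apply: ler_sum => j _.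
by rewrite phiZ mulrC ler_wpM2l ?phi_ge0 ?mx_norm_entry.
Qed.

Lemma phi_lipschitz_continuous (f : V -> R) (L : R) :
  (forall x y, `|f x - f y| <= L * phi (x - y)) -> continuous f.
Proof.
move=> f_lip; have [C C_ge0 phi_le] := phi_le_mx_norm.
apply: (@lipschitz_continuous _ _ f (`|L| * C)) => x y.
rewrite -mulrA; apply: le_trans (f_lip x y) _.
apply: le_trans (ler_wpM2r (phi_ge0 _) (ler_norm L)) _.
by rewrite ler_wpM2l.
Qed.

Lemma continuous_phi : continuous phi.
Proof. by apply: (@phi_lipschitz_continuous _ 1) => x y; rewrite mul1r ler_phi_dist. Qed.

Lemma continuous_phi_subr (x : V) : continuous (fun y : V => phi (y - x)).
Proof.
apply: (@phi_lipschitz_continuous _ 1) => y z.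
by rewrite mul1r (le_trans (ler_phi_dist _ _)) // opprB addrA subrK.
Qed.

Lemma continuous_phi_subl (x : V) : continuous (fun y : V => phi (x - y)).
Proof.
apply: (@phi_lipschitz_continuous _ 1) => y z.
by rewrite mul1r (le_trans (ler_phi_dist _ _)) // opprB addrC addrA subrK phi_distC.
Qed.

Lemma near_phi_lt (x : V) (e : R) : 0 < e -> \forall y \near x, phi (y - x) < e.
Proof.
by have := continuous_phi_subr x x; rewrite /continuous_at subrr phi0 => /cvgr_lt; apply.
Qed.

Lemma mx_norm_le_phi : exists2 m, 0 < m & forall v : V, m * `|v| <= phi v.
Proof.
pose S := [set v : V | `|v| = 1].
have S_compact : compact S.
  apply: bounded_closed_compact; first by exists 1; split => // M M_gt1 v /= ->; exact: ltW.
  apply: (@preimage_closed _ _ (fun v : V => `|v|) [set 1]); last exact: closed_eq.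
  by move=> v _; exact: norm_continuous.
have normalize v : v != 0 -> S (`|v|^-1 *: v).
  by move=> v_neq0; rewrite /S /= normrZ normfV normr_id mulVf ?normr_eq0.
have [[u Su]|S0] := pselect (S !=set0); last first.
  exists 1 => // v; have [->|v_neq0] := eqVneq v 0; first by rewrite normr0 mulr0 phi_ge0.
  by exfalso; apply: S0; exists (`|v|^-1 *: v); exact: normalize.
have [c Sc c_min] := EVT_min_rV (ex_intro _ u Su) S_compact
  (continuous_subspaceT (fun v => continuous_phi v)).
have phic_gt0 : 0 < phi c.
  rewrite lt0r phi_ge0 andbT; apply/eqP => /phi_eq0 c0.
  by move: Sc; rewrite inE /S /= c0 normr0 => /esym/eqP; rewrite oner_eq0.
exists (phi c) => // v; have [->|v_neq0] := eqVneq v 0; first by rewrite normr0 mulr0 phi_ge0.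
have nv_gt0 : 0 < `|v| by rewrite normr_gt0.
have -> : phi v = `|v| * phi (`|v|^-1 *: v).
  by rewrite ge0_phiZ ?invr_ge0 ?ltW // mulrA mulfV ?mul1r // gt_eqF.
rewrite mulrC ler_wpM2l ?(ltW nv_gt0) //; apply: c_min; rewrite inE; exact: normalize.
Qed.

Section Distance.
Context {K : set 'rV[R]_n}.
Hypothesis K_neq0 : K !=set0.
Local Notation d := (dist_phi phi K).
Local Notation xi := (xi_phi phi K).

Lemma dist_phi_le (x : V) {y : V} : K y -> d x <= phi (y - x).
Proof.
move=> Ky; apply: ge_inf; last by exists y.
by exists 0 => _ [z _ <-]; exact: phi_ge0.
Qed.

Lemma dist_phi_ge (x : V) (c : R) : (forall y, K y -> c <= phi (y - x)) -> c <= d x.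
Proof.
move=> c_le; apply: lb_le_inf => [|_ [y Ky <-]]; last exact: c_le.
by have [y Ky] := K_neq0; exists (phi (y - x)), y.
Qed.

Lemma dist_phi_ge0 (x : V) : 0 <= d x.
Proof. by apply: dist_phi_ge => y _; exact: phi_ge0. Qed.

Lemma ler_dist_phi_dist (x y : V) : `|d x - d y| <= phi (x - y).
Proof.
suff dist_le u v : d u - phi (u - v) <= d v.
  by have := dist_le x y; have := dist_le y x; rewrite phi_distC ler_norml; lra.
apply: dist_phi_ge => z Kz; have := dist_phi_le u Kz.
by have := ler_phiD (z - v) (v - u); rewrite addrA subrK [phi (v - u)]phi_distC; lra.
Qed.

Definition ray_scales (x a : V) : set R := [set s | d (a + s *: (x - a)) = s * d x].

Lemma rho_atE (x a : V) : rho_at phi K x a = ereal_sup (EFin @` ray_scales x a).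
Proof. by []. Qed.

Lemma ray_scales1 (x a : V) : ray_scales x a 1.
Proof. by rewrite /ray_scales /= scale1r addrC subrK mul1r. Qed.

Lemma rho_at_ge1 (x a : V) : (1%:E <= rho_at phi K x a)%E.
Proof. by rewrite rho_atE; apply: ereal_sup_ubound; exists 1 => //; exact: ray_scales1. Qed.

Lemma ray_scales_unit {x a : V} {s : R} : xi x a -> 0 <= s <= 1 -> ray_scales x a s.
Proof.
move=> [Ka /= xa_eq] /andP[s_ge0 s_le1]; rewrite /ray_scales /=.
set p := a + s *: (x - a).
have px_eq : phi (p - x) = (1 - s) * d x.
  rewrite (_ : p - x = (1 - s) *: (a - x)) ?ge0_phiZ ?subr_ge0 1?phi_distC ?xa_eq //.
  by apply/rowP => i; rewrite !mxE; ring.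
apply/eqP; rewrite eq_le; apply/andP; split.
  by have := dist_phi_le p Ka; rewrite /p opprD addNKr phiN ge0_phiZ // xa_eq.
apply: dist_phi_ge => y Ky; have := dist_phi_le x Ky.
by have := ler_phiD (y - p) (p - x); rewrite addrA subrK px_eq; lra.
Qed.

Lemma xi_phi_ray {x a : V} {s : R} : xi x a -> 0 <= s -> ray_scales x a s ->
  xi (a + s *: (x - a)) a.
Proof.
by move=> [Ka /= xa_eq] s_ge0 s_ray; split; rewrite //= addrC addKr ge0_phiZ // xa_eq.
Qed.

Lemma ray_scalesM {x a : V} {t : R} (u : R) : ray_scales x a t ->
  ray_scales (a + t *: (x - a)) a u <-> ray_scales x a (t * u).
Proof.
rewrite /ray_scales /= => ->.
by rewrite [a + _ - a]addrC addKr scalerA mulrA [u * t]mulrC.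
Qed.

Lemma ray_scales_le {x a : V} {s u : R} : xi x a -> ray_scales x a s -> 0 <= u <= s ->
  ray_scales x a u.
Proof.
move=> xa s_ray /andP[u_ge0 u_le_s].
have [s_le1|s_gt1] := lerP s 1.
  by apply: ray_scales_unit => //; rewrite u_ge0 (le_trans u_le_s).
have s_gt0 : 0 < s := lt_trans ltr01 s_gt1.
have us_unit : 0 <= u / s <= 1 by rewrite divr_ge0 ?(ltW s_gt0) //= ler_pdivrMr // mul1r.
have := ray_scales_unit (xi_phi_ray xa (ltW s_gt0) s_ray) us_unit.
by rewrite (ray_scalesM _ s_ray) mulrC divfK // gt_eqF.
Qed.

Lemma continuous_dist_ray (a v : V) (c : R) :
  continuous (fun s : R => d (a + s *: v) - s * c).
Proof.
apply: (@lipschitz_continuous _ _ _ (phi v + `|c|)) => s t.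
have -> : d (a + s *: v) - s * c - (d (a + t *: v) - t * c) =
  (d (a + s *: v) - d (a + t *: v)) - (s - t) * c by ring.
rewrite [leRHS]mulrDl; apply: le_trans (ler_normB _ _) (lerD _ _).
  apply: le_trans (ler_dist_phi_dist _ _) _.
  by rewrite opprD addrACA subrr add0r -scalerBl phiZ mulrC.
by rewrite normrM mulrC.
Qed.

Lemma ray_scales_le_rho {x a : V} {t : R} : xi x a -> 0 <= t ->
  (t%:E <= rho_at phi K x a)%E -> ray_scales x a t.
Proof.
move=> xa t_ge0 t_le_rho.
have [[s [s_ray t_le_s]]|no_above] := pselect (exists s, ray_scales x a s /\ t <= s).
  by apply: ray_scales_le xa s_ray _; rewrite t_ge0.
apply/eqP; rewrite -subr_eq0; apply/eqP.
apply: (@continuous_root_at_ereal_sup _ (ray_scales x a)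
  (fun s => d (a + s *: (x - a)) - s * d x) t _ _ t_le_rho).
  exact: continuous_dist_ray.
move=> s s_ray; split; first by rewrite s_ray subrr.
by rewrite leNgt; apply/negP => t_lt_s; apply: no_above; exists s; split => //; exact: ltW.
Qed.

Lemma rho_at_scale {x a : V} {t : R} : xi x a -> 0 < t -> ray_scales x a t ->
  rho_at phi K x a = (t%:E * rho_at phi K (a + t *: (x - a)) a)%E.
Proof.
move=> xa t_gt0 t_ray; have tsK (s : R) : t * (s / t) = s by rewrite mulrC divfK // lt0r_neq0.
rewrite !rho_atE -(ereal_sup_pZl _ t_gt0); congr ereal_sup.
apply/seteqP; split => z /=.
  move=> [s s_ray <-]; exists (s / t)%:E; last by rewrite -EFinM tsK.
  by exists (s / t); first by apply/(ray_scalesM _ t_ray); rewrite tsK.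
move=> [_ [u u_ray <-] <-]; exists (t * u); last exact: EFinM.
exact: (ray_scalesM u t_ray).1 u_ray.
Qed.

Section StrictlyConvex.
Hypothesis phi_sc : strictly_convex phi.

Lemma ray_scales_le1 {x a b : V} {s : R} :
  xi x a -> xi x b -> a != b -> ray_scales x a s -> s <= 1.
Proof.
move=> [Ka /= xa_eq] [Kb /= xb_eq] a_neq_b s_ray; rewrite leNgt; apply/negP => s_gt1.
set y := a + s *: (x - a); have dy : d y = s * d x := s_ray.
have xy_eq : x - y = (s - 1) *: (a - x) by apply/rowP => i; rewrite !mxE; ring.
have phi_xy : phi (x - y) = (s - 1) * d x.
  by rewrite xy_eq ge0_phiZ ?subr_ge0 ?ltW // phi_distC xa_eq.
have phi_bx : phi (b - x) = d x by rewrite phi_distC.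
have tight : phi ((x - y) + (b - x)) = phi (x - y) + phi (b - x).
  apply/eqP; rewrite eq_le ler_phiD /= phi_xy phi_bx.
  have -> : x - y + (b - x) = b - y by rewrite addrC addrA subrK.
  by apply: le_trans (dist_phi_le y Kb); rewrite dy; lra.
have dx_neq0 : d x != 0.
  apply: contraNneq a_neq_b => dx0; apply/eqP.
  by move: xa_eq xb_eq; rewrite dx0 => /phi_eq0/subr0_eq <- /phi_eq0/subr0_eq ->.
have s1_neq0 : s - 1 != 0 by rewrite subr_eq0 gt_eqF.
have := phi_sc _ _ tight; rewrite phi_xy phi_bx xy_eq scalerA mulrC.
by move/(scalerI (mulf_neq0 s1_neq0 dx_neq0))/subIr/eqP; rewrite (negbTE a_neq_b).
Qed.

Lemma rho_at_eq1 {x a b : V} :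
  xi x a -> xi x b -> a != b -> rho_at phi K x a = 1%:E.
Proof.
move=> xa xb a_neq_b; apply/eqP; rewrite eq_le rho_at_ge1 andbT rho_atE.
by apply: ge_ereal_sup => _ [s s_ray <-]; rewrite lee_fin (ray_scales_le1 xa xb a_neq_b s_ray).
Qed.

Lemma rho_phiE {x a : V} : xi x a -> rho_phi phi K x = rho_at phi K x a.
Proof.
move=> xa; rewrite /rho_phi; set b := xget 0 (xi x).
have xb : xi x b := xgetI 0 xa.
have [->//|b_neq_a] := eqVneq b a.
by rewrite (rho_at_eq1 xb xa b_neq_a) (rho_at_eq1 xa xb) // eq_sym.
Qed.

Lemma rho_phi_scale (x a : V) (t : R) : xi x a -> 0 < t ->
  (t%:E <= rho_phi phi K x)%E ->
  rho_phi phi K x = (t%:E * rho_phi phi K (a + t *: (x - a)))%E.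
Proof.
move=> xa t_gt0; rewrite (rho_phiE xa) => t_le_rho.
have t_ray := ray_scales_le_rho xa (ltW t_gt0) t_le_rho.
by rewrite (rho_at_scale xa t_gt0 t_ray) (rho_phiE (xi_phi_ray xa (ltW t_gt0) t_ray)).
Qed.

Lemma reach_phi_attained {a eta : V} {r : R} : normal_bundle phi K a eta ->
  reach_phi phi K a eta = r%:E -> 0 < r /\ d (a + r *: eta) = r.
Proof.
move=> [_ _ [s0 s0_gt0 ds0]] reach_r.
pose T := [set s : R | 0 < s /\ d (a + s *: eta) = s].
have T_le_r s : T s -> s <= r.
  by move=> Ts; rewrite -lee_fin -reach_r; apply: ereal_sup_ubound; exists s.
have r_gt0 : 0 < r := lt_le_trans s0_gt0 (T_le_r s0 (conj s0_gt0 ds0)).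
split => //; apply/eqP; rewrite -subr_eq0 -[X in _ - X]mulr1; apply/eqP.
apply: (@continuous_root_at_ereal_sup _ T (fun s => d (a + s *: eta) - s * 1) r).
- exact: continuous_dist_ray.
- by move=> s [s_gt0 ds]; rewrite mulr1 ds subrr; split; last exact: T_le_r.
- by rewrite -reach_r.
Qed.

Lemma cut_phi_rho1 (x : V) : cut_phi phi K x -> rho_phi phi K x = 1%:E.
Proof.
move=> [a [eta [a_eta [r [reach_r ->]]]]].
have [r_gt0 dr] := reach_phi_attained a_eta reach_r.
have [Ka eta1 _] := a_eta.
have xa : xi (a + r *: eta) a.
  by split; rewrite //= addrC addKr ge0_phiZ ?ltW // eta1 mulr1 dr.
rewrite (rho_phiE xa); apply/eqP; rewrite eq_le rho_at_ge1 andbT rho_atE.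
apply: ge_ereal_sup => _ [u u_ray <-]; rewrite lee_fin.
have [u_le0|u_gt0] := leP u 0; first exact: le_trans u_le0 ler01.
have : ((u * r)%:E <= r%:E)%E.
  rewrite -reach_r; apply: ereal_sup_ubound; exists (u * r) => //.
  split; first exact: mulr_gt0.
  by move: u_ray; rewrite /ray_scales /= [a + _ - a]addrC addKr scalerA dr.
by rewrite lee_fin -{2}[r]mul1r ler_pM2r.
Qed.

Section Closed.
Hypothesis K_closed : closed K.

Lemma compact_phi_sublevel (x : V) (M : R) :
  compact (K `&` [set a | phi (x - a) <= M]).
Proof.
have [m m_gt0 m_le] := mx_norm_le_phi.
apply: bounded_closed_compact.
  exists (`|x| + M / m); split; first exact: num_real.
  move=> M' M'_gt a [_ /= xa_le]; apply/ltW/(le_lt_trans _ M'_gt).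
  have : `|x - a| <= M / m by rewrite ler_pdivlMr // mulrC (le_trans (m_le _)).
  by have := ler_normD x (a - x); rewrite addrC subrK distrC; lra.
apply: closedI => //.
rewrite (_ : [set a | _] = (fun a => phi (x - a)) @^-1` [set r | r <= M]) //.
by apply: preimage_closed; [move=> a _; exact: continuous_phi_subl | exact: closed_le].
Qed.

Lemma xi_phi_neq0 (x : V) : xi x !=set0.
Proof.
pose B := K `&` [set a | phi (x - a) <= d x + 1].
have [_ [y Ky <-] yx_lt] : exists2 r, [set phi (y - x) | y in K] r & r < d x + 1.
  by apply: inf_lt; [have [y Ky] := K_neq0; exists (phi (y - x)), y | rewrite ltrDl].
have B_neq0 : B !=set0 by exists y; split; rewrite //= phi_distC ltW.
have [c] := EVT_min_rV B_neq0 (compact_phi_sublevel x (d x + 1))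
  (continuous_subspaceT (fun a => continuous_phi_subl x a)).
rewrite inE => -[Kc /= xc_le] c_min; exists c; split => //=.
apply/eqP; rewrite eq_le -{2}phi_distC dist_phi_le // andbT.
apply: dist_phi_ge => z Kz; rewrite [phi (z - x)]phi_distC.
have [xz_le|/ltW] := leP (phi (x - z)) (d x + 1); first by apply: c_min; rewrite inE.
exact: le_trans xc_le.
Qed.

Lemma rho1_cut_phi (x : V) : rho_phi phi K x = 1%:E -> cut_phi phi K x.
Proof.
have [a xa] := xi_phi_neq0 x; rewrite (rho_phiE xa) => rho1.
have [Ka /= xa_eq] := xa.
have dx_gt0 : 0 < d x.
  rewrite lt0r dist_phi_ge0 andbT; apply/eqP => dx0.
  have x_eq_a : x = a by move: xa_eq; rewrite dx0 => /phi_eq0/subr0_eq.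
  have : (2%:E <= rho_at phi K x a)%E.
    rewrite rho_atE; apply: ereal_sup_ubound; exists 2; last by [].
    by rewrite /ray_scales /= -x_eq_a subrr scaler0 addr0 dx0 mulr0.
  by rewrite rho1 lee_fin; lra.
have dx_neq0 : d x != 0 := lt0r_neq0 dx_gt0.
pose eta := (d x)^-1 *: (x - a).
have eta1 : phi eta = 1 by rewrite ge0_phiZ ?invr_ge0 ?dist_phi_ge0 // xa_eq mulVf.
have x_eq : a + d x *: eta = x by rewrite scalerA mulfV // scale1r addrC subrK.
exists a, eta; split; first by split => //; exists (d x); rewrite // x_eq.
exists (d x); split; last by rewrite x_eq.
apply/eqP; rewrite eq_le; apply/andP; split; last first.
  by apply: ereal_sup_ubound; exists (d x); [split; rewrite // x_eq | by []].
apply: ge_ereal_sup => _ [s [s_gt0 ds] <-]; rewrite lee_fin.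
have : ((s / d x)%:E <= rho_at phi K x a)%E.
  rewrite rho_atE; apply: ereal_sup_ubound; exists (s / d x); last by [].
  by rewrite /ray_scales /= -scalerA ds divfK.
by rewrite rho1 lee_fin ler_pdivrMr // mul1r.
Qed.

Definition ray_defect (s : R) (x b : V) : R :=
  `|phi (x - b) - d x| + `|d (b + s *: (x - b)) - s * d x|.

Lemma continuous_ray_defect (s : R) (x : V) : continuous (ray_defect s x).
Proof.
apply: (@phi_lipschitz_continuous _ (1 + `|1 - s|)) => b c.
rewrite /ray_defect opprD addrACA mulrDl mul1r.
apply: le_trans (ler_normD _ _) (lerD _ _); apply: le_trans (ler_dist_dist _ _) _.
  rewrite opprB addrA subrK (le_trans (ler_phi_dist _ _)) //.
  by rewrite opprB addrC addrA subrK phi_distC.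
rewrite opprB addrA subrK; apply: le_trans (ler_dist_phi_dist _ _) _.
have -> : b + s *: (x - b) - (c + s *: (x - c)) = (1 - s) *: (b - c).
  by apply/rowP => i; rewrite !mxE; ring.
by rewrite phiZ.
Qed.

Lemma ray_defect_le (x : V) {s : R} {y b : V} : 0 <= s -> xi y b -> ray_scales y b s ->
  ray_defect s x b <= 2 * (1 + s) * phi (y - x).
Proof.
move=> s_ge0 [_ /= yb_eq] s_ray; rewrite /ray_defect.
have dxy := ler_dist_phi_dist y x.
have near_x : `|phi (x - b) - d x| <= 2 * phi (y - x).
  have := ler_phi_dist (x - b) (y - b); rewrite yb_eq opprB addrA subrK [phi (x - y)]phi_distC.
  by have := ler_normD (phi (x - b) - d y) (d y - d x); rewrite addrA subrK; lra.
have near_sx : `|d (b + s *: (x - b)) - s * d x| <= 2 * s * phi (y - x).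
  have := ler_dist_phi_dist (b + s *: (x - b)) (b + s *: (y - b)).
  have -> : b + s *: (x - b) - (b + s *: (y - b)) = s *: (x - y).
    by apply/rowP => i; rewrite !mxE; ring.
  rewrite s_ray ge0_phiZ // [phi (x - y)]phi_distC => shift.
  have := ler_normD (d (b + s *: (x - b)) - s * d y) (s * d y - s * d x).
  rewrite addrA subrK -mulrBr normrM ger0_norm //.
  by have := ler_wpM2l s_ge0 dxy; lra.
by lra.
Qed.

Lemma ray_defect_gt0 {s : R} {x : V} : (rho_phi phi K x < s%:E)%E ->
  exists2 m, 0 < m & forall b, K b -> phi (x - b) <= d x + 1 -> m <= ray_defect s x b.
Proof.
move=> rho_lt_s; have [a xa] := xi_phi_neq0 x.
pose B := K `&` [set b | phi (x - b) <= d x + 1].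
have B_neq0 : B !=set0.
  by have [Ka /= xa_eq] := xa; exists a; split; rewrite //= xa_eq lerDl.
have [c] := EVT_min_rV B_neq0 (compact_phi_sublevel x (d x + 1))
  (continuous_subspaceT (fun b => continuous_ray_defect s x b)).
rewrite inE => -[Kc _] c_min; exists (ray_defect s x c); last first.
  by move=> b Kb xb_le; apply: c_min; rewrite inE.
rewrite lt0r addr_ge0 // andbT; apply/eqP.
move/eqP; rewrite paddr_eq0 // !normr_eq0 !subr_eq0 => /andP[/eqP xc_eq /eqP s_ray].
have xc : xi x c by [].
have : (s%:E <= rho_phi phi K x)%E.
  by rewrite (rho_phiE xc) rho_atE; apply: ereal_sup_ubound; exists s.
by rewrite leNgt rho_lt_s.
Qed.

Lemma rho_phi_usc : upper_semicontinuous (rho_phi phi K).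
Proof.
move=> x c rho_lt_c; have [a xa] := xi_phi_neq0 x.
have := rho_at_ge1 x a; rewrite -(rho_phiE xa).
case rho_r : (rho_phi phi K x) rho_lt_c => [r| |] //.
rewrite lte_fin lee_fin => r_lt_c r_ge1.
pose s := (r + c) / 2.
have s_gt0 : 0 < s by rewrite /s; lra.
have rho_lt_s : (rho_phi phi K x < s%:E)%E by rewrite rho_r lte_fin /s; lra.
have [m m_gt0 m_le] := ray_defect_gt0 rho_lt_s.
pose e := Num.min (1 / 2) (m / (4 * (1 + s))).
have e_gt0 : 0 < e.
  by rewrite lt_min; apply/andP; split; [lra | apply: divr_gt0 => //; lra].
have e_le1 : e <= 1 / 2 by rewrite ge_min lexx.
have e_le_m : 4 * (1 + s) * e <= m.
  by rewrite mulrC -ler_pdivlMr; [rewrite ge_min lexx orbT | lra].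
exists [set y | phi (y - x) < e]; first exact: near_phi_lt.
move=> y /= yx_lt; rewrite ltNge; apply/negP => c_le_rho.
have [b yb] := xi_phi_neq0 y; have [Kb /= yb_eq] := yb.
have s_ray : ray_scales y b s.
  apply: (ray_scales_le_rho yb (ltW s_gt0)); rewrite -(rho_phiE yb).
  by apply: le_trans c_le_rho; rewrite lee_fin /s; lra.
have b_near : phi (x - b) <= d x + 1.
  have := ler_phiD (x - y) (y - b); rewrite addrA subrK yb_eq [phi (x - y)]phi_distC.
  have := ler_dist_phi_dist y x; rewrite ler_norml; lra.
have := m_le b Kb b_near; have := ray_defect_le x (ltW s_gt0) yb s_ray.
have : 2 * (1 + s) * phi (y - x) <= 2 * (1 + s) * e.
  by rewrite ler_wpM2l ?ltW //; lra.
lra.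
Qed.

End Closed.
End StrictlyConvex.
End Distance.
End Norm.

Theorem lemma2p33 (R : realType) (n : nat) (phi : 'rV[R]_n -> R) (K : set 'rV[R]_n)
  (Hnorm : is_norm phi) (Hsc : strictly_convex phi) (HC2 : C2_off_origin phi)
  (HK : closed K) (HK0 : K !=set0) :
  [/\ (forall x, (1%:E <= rho_phi phi K x)%E),
      upper_semicontinuous (rho_phi phi K),
      (forall (x a : 'rV[R]_n) (t : R), xi_phi phi K x a -> 0 < t ->
          (t%:E <= rho_phi phi K x)%E ->
          rho_phi phi K x = (t%:E * rho_phi phi K (a + t *: (x - a)))%E) &
      cut_phi phi K = [set x | rho_phi phi K x = 1%:E]].
Proof.
split.
- by move=> x; exact: rho_at_ge1.
- exact: (rho_phi_usc Hnorm HK0 Hsc HK).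
- exact: (rho_phi_scale Hnorm HK0 Hsc).
- apply/seteqP; split => x.
    exact: (cut_phi_rho1 Hnorm HK0 Hsc x).
  exact: (rho1_cut_phi Hnorm HK0 Hsc HK x).
Qed.
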